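(* Let $M,N,m,n$ be integers with $0\le m\le M$, $0\le n\le N$, let $\bm A$ be a real $2^m\times 2^n$ matrix and $\bm B$ a real $2^{M-m}\times 2^{N-n}$ matrix. Then for any integers $m',n'$ with $0\le m'\le M$, $0\le n'\le N$, $$\|\mathcal R_{m',n'}[\bm A\otimes\bm B]\|_S=\|\mathcal R_{m\wedge m',\,n\wedge n'}[\bm A]\|_S\cdot\|\mathcal R_{(m'-m)_+,\,(n'-n)_+}[\bm B]\|_S.$$
   Context: $\|\cdot\|_S$ is the spectral norm; $x_+=\max\{x,0\}$, $a\wedge b=\min\{a,b\}$. For a $p\times q$ matrix, $\mathrm{vec}$ stacks its rows into a $pq$-vector. Rearrangement: for a $2^a\times 2^b$ matrix $\bm C$ and integers $0\le k\le a$, $0\le l\le b$, view $\bm C$ as a $2^k\times 2^l$ array of blocks $\bm C_{i,j}$ each of size $2^{a-k}\times 2^{b-l}$; $\mathcal R_{k,l}[\bm C]$ is the $2^{k+l}\times 2^{a+b-k-l}$ matrix whose rows are $\mathrm{vec}(\bm C_{1,1})',\dots,\mathrm{vec}(\bm C_{1,2^l})',\dots,\mathrm{vec}(\bm C_{2^k,2^l})'$ (blocks in row-major order). Here $\bm A\otimes\bm B$ is $2^M\times 2^N$. *)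

(* real matrices as functions nat -> nat -> R with explicit
   dimensions; only entries with indices inside the dimensions are ever read. *)
From Stdlib Require Import Reals ClassicalEpsilon.
Open Scope R_scope.

Fixpoint rsum (n : nat) (f : nat -> R) : R :=
  match n with O => 0 | S k => rsum k f + f k end.

Definition mat := nat -> nat -> R.

Definition norm_Ax (r c : nat) (A : mat) (x : nat -> R) : R :=
  sqrt (rsum r (fun i => (rsum c (fun j => A i j * x j)) ^ 2)).

Definition opnorm_set (r c : nat) (A : mat) (t : R) : Prop :=
  exists x : nat -> R, rsum c (fun j => x j ^ 2) <= 1 /\ t = norm_Ax r c A x.

Definition specnorm (r c : nat) (A : mat) : R :=
  epsilon (inhabits 0) (fun s => is_lub (opnorm_set r c A) s).

Definition kron (M N m n : nat) (A B : mat) : mat :=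
  fun i j => A (i / 2 ^ (M - m))%nat (j / 2 ^ (N - n))%nat
           * B (i mod 2 ^ (M - m))%nat (j mod 2 ^ (N - n))%nat.

(* Rearrangement R_{k,l}[C] of a 2^a x 2^b matrix C: row p*2^l+q is vec of
   block C_{p,q} (row-major); column u*2^(b-l)+v is entry (u,v) of the block.
   Result is 2^(k+l) x 2^(a+b-k-l). *)
Definition rearr (a b k l : nat) (C : mat) : mat :=
  fun r c => C ((r / 2 ^ l) * 2 ^ (a - k) + c / 2 ^ (b - l))%nat
               ((r mod 2 ^ l) * 2 ^ (b - l) + c mod 2 ^ (b - l))%nat.

Definition specnorm_rearr (a b k l : nat) (C : mat) : R :=
  specnorm (2 ^ (k + l)) (2 ^ (a + b - k - l)) (rearr a b k l C).

From Stdlib Require Import Reals ClassicalEpsilon Lia Psatz.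
Open Scope R_scope.

(* Write the row and column indices of the rearranged matrices in binary. The rows of
   R_{m',n'}[A ⊗ B] are indexed by digit blocks (α, β, α', β') of lengths m ∧ m',
   (m' - m)_+, n ∧ n', (n' - n)_+ (a, b, a', b' below) and its columns by blocks
   (γ, δ, γ', δ') of lengths (m - m')_+, M - max(m, m'), (n - n')_+, N - max(n, n')
   (g, d, g', d' below); the rows and columns of R[A] ⊗ R[B] carry the same blocks in
   the orders (α, α', β, β') and (γ, γ', δ, δ'). Since β or γ is empty, and β' or γ',
   the A- and B-indices of corresponding entries agree, so the two matrices differ by
   row and column permutations exchanging the two middle digit blocks. The spectral norm
   is invariant under such permutations and multiplicative for Kronecker products. *)

Lemma div_mul_add (x q y : nat) : (y < q)%nat -> ((x * q + y) / q = x)%nat.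
Proof. intros Hy. symmetry. apply Nat.div_unique with y; [exact Hy | lia]. Qed.

Lemma mod_mul_add (x q y : nat) : (y < q)%nat -> ((x * q + y) mod q = y)%nat.
Proof. intros Hy. symmetry. apply Nat.mod_unique with x; [exact Hy | lia]. Qed.

Lemma mul_add_lt (x q y a : nat) : (x < a)%nat -> (y < q)%nat -> (x * q + y < a * q)%nat.
Proof. intros. nia. Qed.

Lemma rsum_ext n f g : (forall i, (i < n)%nat -> f i = g i) -> rsum n f = rsum n g.
Proof.
  induction n as [|n IH]; intros Hfg; simpl; [reflexivity|].
  rewrite IH by (intros; apply Hfg; lia). rewrite Hfg by lia. reflexivity.
Qed.

Lemma rsum_plus n f g : rsum n (fun i => f i + g i) = rsum n f + rsum n g.
Proof. induction n as [|n IH]; simpl; [lra|]. rewrite IH. lra. Qed.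

Lemma rsum_scal n k f : rsum n (fun i => k * f i) = k * rsum n f.
Proof. induction n as [|n IH]; simpl; [lra|]. rewrite IH. lra. Qed.

Lemma rsum_const0 n : rsum n (fun _ => 0) = 0.
Proof. induction n as [|n IH]; simpl; [lra|]. rewrite IH. lra. Qed.

Lemma rsum_le n f g : (forall i, (i < n)%nat -> f i <= g i) -> rsum n f <= rsum n g.
Proof.
  induction n as [|n IH]; intros Hfg; simpl; [lra|].
  assert (rsum n f <= rsum n g) by (apply IH; intros; apply Hfg; lia).
  assert (f n <= g n) by (apply Hfg; lia). lra.
Qed.

Lemma rsum_nonneg n f : (forall i, (i < n)%nat -> 0 <= f i) -> 0 <= rsum n f.
Proof. intros Hf. rewrite <- (rsum_const0 n). apply rsum_le. exact Hf. Qed.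

Lemma rsum_ge_term n f k : (forall i, (i < n)%nat -> 0 <= f i) -> (k < n)%nat -> f k <= rsum n f.
Proof.
  induction n as [|n IH]; intros Hf Hk; simpl; [lia|].
  assert (0 <= rsum n f) by (apply rsum_nonneg; intros; apply Hf; lia).
  destruct (Nat.eq_dec k n) as [->|Hkn]; [lra|].
  assert (f k <= rsum n f) by (apply IH; [intros; apply Hf | ]; lia).
  assert (0 <= f n) by (apply Hf; lia). lra.
Qed.

Lemma rsum_abs n f : Rabs (rsum n f) <= rsum n (fun i => Rabs (f i)).
Proof.
  induction n as [|n IH]; simpl; [rewrite Rabs_R0; lra|].
  eapply Rle_trans; [apply Rabs_triang | lra].
Qed.

Lemma rsum_add n k f : rsum (n + k) f = rsum n f + rsum k (fun j => f (n + j)%nat).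
Proof.
  induction k as [|k IH]; simpl; [rewrite Nat.add_0_r; lra|].
  rewrite Nat.add_succ_r. simpl. rewrite IH. lra.
Qed.

Lemma rsum_split p q f :
  rsum (p * q) f = rsum p (fun i => rsum q (fun j => f (i * q + j)%nat)).
Proof.
  induction p as [|p IH]; simpl; [reflexivity|].
  rewrite Nat.add_comm, rsum_add, IH. reflexivity.
Qed.

Lemma rsum_swap p q f :
  rsum p (fun i => rsum q (fun j => f i j)) = rsum q (fun j => rsum p (fun i => f i j)).
Proof.
  induction p as [|p IH]; simpl; [rewrite rsum_const0; reflexivity|].
  rewrite IH, <- rsum_plus. reflexivity.
Qed.

Lemma rsum_mul_rsum p q f g :
  rsum p (fun i => rsum q (fun j => f i * g j)) = rsum p f * rsum q g.
Proof.
  rewrite Rmult_comm, <- rsum_scal. apply rsum_ext. intros i _.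
  rewrite Rmult_comm, <- rsum_scal. apply rsum_ext. intros; ring.
Qed.

Definition sqnorm (n : nat) (x : nat -> R) : R := rsum n (fun i => x i ^ 2).

Definition mulmv (c : nat) (A : mat) (x : nat -> R) : nat -> R :=
  fun i => rsum c (fun j => A i j * x j).

Lemma sqnorm_nonneg n x : 0 <= sqnorm n x.
Proof. apply rsum_nonneg. intros; nra. Qed.

Lemma sqnorm_scal n t x : sqnorm n (fun i => t * x i) = t ^ 2 * sqnorm n x.
Proof. unfold sqnorm. rewrite <- rsum_scal. apply rsum_ext. intros; ring. Qed.

Lemma sqnorm_split p q x :
  sqnorm (p * q) x = rsum p (fun i => sqnorm q (fun j => x (i * q + j)%nat)).
Proof. apply rsum_split. Qed.

Lemma sqnorm_mul p q u v :
  rsum p (fun i => sqnorm q (fun j => u i * v j)) = sqnorm p u * sqnorm q v.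
Proof.
  unfold sqnorm. rewrite <- rsum_mul_rsum. apply rsum_ext. intros i _.
  apply rsum_ext. intros; ring.
Qed.

Lemma sqnorm_le_1_entry n x j : sqnorm n x <= 1 -> (j < n)%nat -> Rabs (x j) <= 1.
Proof.
  intros Hx Hj.
  assert (x j ^ 2 <= 1).
  { eapply Rle_trans; [|exact Hx]. apply (rsum_ge_term n (fun j => x j ^ 2)); auto.
    intros; nra. }
  rewrite <- pow2_abs in H. pose proof (Rabs_pos (x j)). nra.
Qed.

Lemma sqnorm_eq0_entry n x j : sqnorm n x = 0 -> (j < n)%nat -> x j = 0.
Proof.
  intros Hx Hj. assert (x j ^ 2 <= 0).
  { rewrite <- Hx. apply (rsum_ge_term n (fun j => x j ^ 2)); auto. intros; nra. }
  nra.
Qed.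

Lemma mulmv_scal c A t x i : mulmv c A (fun j => t * x j) i = t * mulmv c A x i.
Proof. unfold mulmv. rewrite <- rsum_scal. apply rsum_ext. intros; ring. Qed.

Lemma is_lub_ext (E F : R -> Prop) s : (forall t, E t <-> F t) -> is_lub E s -> is_lub F s.
Proof.
  intros HEF [Hub Hleast]. split.
  - intros t Ht. apply Hub, HEF, Ht.
  - intros b Hb. apply Hleast. intros t Ht. apply Hb, HEF, Ht.
Qed.

Lemma opnorm_set_0 r c A : opnorm_set r c A 0.
Proof.
  exists (fun _ => 0). split.
  - rewrite (rsum_ext c _ (fun _ => 0)) by (intros; ring). rewrite rsum_const0. lra.
  - unfold norm_Ax. rewrite (rsum_ext r _ (fun _ => 0)), rsum_const0, sqrt_0; [reflexivity|].
    intros i _. rewrite (rsum_ext c _ (fun _ => 0)), rsum_const0 by (intros; ring). ring.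
Qed.

(* Entries of a unit vector are at most 1 in absolute value, so |(A x)_i| <= sum_j |A_ij|. *)
Lemma opnorm_set_bound r c A : bound (opnorm_set r c A).
Proof.
  exists (sqrt (rsum r (fun i => (rsum c (fun j => Rabs (A i j))) ^ 2))).
  intros t [x [Hx ->]]. apply sqrt_le_1_alt, rsum_le. intros i _.
  assert (Hrow : Rabs (mulmv c A x i) <= rsum c (fun j => Rabs (A i j))).
  { eapply Rle_trans; [apply rsum_abs|]. apply rsum_le. intros j Hj. rewrite Rabs_mult.
    pose proof (sqnorm_le_1_entry c x j Hx Hj). pose proof (Rabs_pos (A i j)).
    pose proof (Rabs_pos (x j)). nra. }
  change (mulmv c A x i ^ 2 <= rsum c (fun j => Rabs (A i j)) ^ 2).
  rewrite <- pow2_abs. pose proof (Rabs_pos (mulmv c A x i)). nra.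
Qed.

Lemma specnorm_lub r c A : is_lub (opnorm_set r c A) (specnorm r c A).
Proof.
  unfold specnorm. apply epsilon_spec.
  destruct (completeness _ (opnorm_set_bound r c A)) as [s Hs];
    [exists 0; apply opnorm_set_0 | exists s; exact Hs].
Qed.

Lemma specnorm_nonneg r c A : 0 <= specnorm r c A.
Proof. apply (proj1 (specnorm_lub r c A)), opnorm_set_0. Qed.

Lemma norm_mulmv_le_specnorm r c A x :
  sqnorm c x <= 1 -> sqrt (sqnorm r (mulmv c A x)) <= specnorm r c A.
Proof. intros Hx. apply (proj1 (specnorm_lub r c A)). exists x. split; auto. Qed.

Lemma specnorm_bound r c A x : sqnorm r (mulmv c A x) <= specnorm r c A ^ 2 * sqnorm c x.
Proof.
  pose proof (specnorm_nonneg r c A) as Hs. pose proof (sqnorm_nonneg r (mulmv c A x)) as HQ.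
  destruct (Rle_lt_or_eq_dec 0 (sqnorm c x) (sqnorm_nonneg c x)) as [Hpos|Hzero].
  - set (t := / sqrt (sqnorm c x)).
    assert (Ht : t ^ 2 * sqnorm c x = 1).
    { unfold t. rewrite pow_inv, pow2_sqrt by lra. field. lra. }
    assert (Ht0 : 0 < t ^ 2).
    { apply pow_lt, Rinv_0_lt_compat, sqrt_lt_R0. exact Hpos. }
    assert (Hle := norm_mulmv_le_specnorm r c A (fun j => t * x j)).
    rewrite sqnorm_scal in Hle.
    assert (Hmv : sqnorm r (mulmv c A (fun j => t * x j)) = t ^ 2 * sqnorm r (mulmv c A x)).
    { rewrite <- sqnorm_scal. apply rsum_ext. intros i _. rewrite mulmv_scal. reflexivity. }
    rewrite Hmv in Hle. specialize (Hle (Req_le _ _ Ht)).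
    assert (t ^ 2 * sqnorm r (mulmv c A x) <= specnorm r c A ^ 2).
    { rewrite <- (pow2_sqrt (t ^ 2 * _)) by nra.
      pose proof (sqrt_pos (t ^ 2 * sqnorm r (mulmv c A x))). nra. }
    replace (sqnorm r (mulmv c A x))
      with (t ^ 2 * sqnorm r (mulmv c A x) * sqnorm c x) 
      by (transitivity (sqnorm r (mulmv c A x) * (t ^ 2 * sqnorm c x)); [ring | rewrite Ht; ring]).
    apply Rmult_le_compat_r; lra.
  - rewrite <- Hzero, Rmult_0_r.
    unfold sqnorm, mulmv. rewrite (rsum_ext r _ (fun _ => 0)), rsum_const0; [lra|].
    intros i _. rewrite (rsum_ext c _ (fun _ => 0)), rsum_const0; [ring|].
    intros j Hj. rewrite (sqnorm_eq0_entry c x j) by auto. ring.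
Qed.

Lemma specnorm_le r c A s :
  0 <= s -> (forall x, sqnorm r (mulmv c A x) <= s ^ 2 * sqnorm c x) -> specnorm r c A <= s.
Proof.
  intros Hs Hbound. apply (proj2 (specnorm_lub r c A)). intros t [x [Hx ->]].
  rewrite <- (sqrt_pow2 s Hs). apply sqrt_le_1_alt.
  eapply Rle_trans; [apply Hbound|].
  pose proof (pow2_ge_0 s). rewrite <- (Rmult_1_r (s ^ 2)) at 2.
  apply Rmult_le_compat_l; assumption.
Qed.

Lemma is_lub_mul_le (S1 S2 : R -> Prop) s1 s2 k :
  is_lub S1 s1 -> is_lub S2 s2 -> 0 <= s1 -> 0 <= k -> (forall t, S2 t -> 0 <= t) ->
  (forall t1 t2, S1 t1 -> S2 t2 -> t1 * t2 <= k) -> s1 * s2 <= k.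
Proof.
  intros [_ Hleast1] [_ Hleast2] Hs1 Hk HS2 Hprod.
  assert (Hs1t : forall t2, S2 t2 -> s1 * t2 <= k).
  { intros t2 Ht2. destruct (Rle_lt_or_eq_dec 0 t2 (HS2 _ Ht2)) as [Hpos| <-]; [|lra].
    assert (s1 <= k / t2).
    { apply Hleast1. intros t1 Ht1. apply (Rmult_le_reg_r t2); [exact Hpos|].
      unfold Rdiv. rewrite Rmult_assoc, Rinv_l, Rmult_1_r by lra. auto. }
    replace k with (k / t2 * t2) by (field; lra). apply Rmult_le_compat_r; lra. }
  destruct (Rle_lt_or_eq_dec 0 s1 Hs1) as [Hpos| <-]; [|lra].
  assert (s2 <= k / s1).
  { apply Hleast2. intros t2 Ht2. apply (Rmult_le_reg_l s1); [exact Hpos|].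
    replace (s1 * (k / s1)) with k by (field; lra). auto. }
  replace k with (s1 * (k / s1)) by (field; lra). apply Rmult_le_compat_l; lra.
Qed.

Lemma opnorm_set_reindex r c r' c' (C C' : mat) sg tau :
  (forall i j, (i < r')%nat -> (j < c')%nat -> C' i j = C (sg i) (tau j)) ->
  (forall f, rsum r' (fun i => f (sg i)) = rsum r f) ->
  (forall f, rsum c' (fun j => f (tau j)) = rsum c f) ->
  forall t, opnorm_set r c C t -> opnorm_set r' c' C' t.
Proof.
  intros HC Hsg Htau t [x [Hx ->]]. exists (fun j => x (tau j)). split.
  - rewrite (Htau (fun j => x j ^ 2)). exact Hx.
  - unfold norm_Ax. f_equal.
    rewrite <- (Hsg (fun i => rsum c (fun j => C i j * x j) ^ 2)).
    apply rsum_ext. intros i Hi. f_equal.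
    rewrite <- (Htau (fun j => C (sg i) j * x j)).
    apply rsum_ext. intros j Hj. rewrite HC; auto.
Qed.

Lemma specnorm_reindex r c r' c' (C C' : mat) sg tau sg' tau' :
  (forall i j, (i < r')%nat -> (j < c')%nat -> C' i j = C (sg i) (tau j)) ->
  (forall i, (i < r)%nat -> (sg' i < r')%nat /\ sg (sg' i) = i) ->
  (forall j, (j < c)%nat -> (tau' j < c')%nat /\ tau (tau' j) = j) ->
  (forall f, rsum r' (fun i => f (sg i)) = rsum r f) ->
  (forall f, rsum c' (fun j => f (tau j)) = rsum c f) ->
  (forall f, rsum r (fun i => f (sg' i)) = rsum r' f) ->
  (forall f, rsum c (fun j => f (tau' j)) = rsum c' f) ->
  specnorm r' c' C' = specnorm r c C.
Proof.
  intros HC Hsg Htau Hsum_sg Hsum_tau Hsum_sg' Hsum_tau'.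
  apply (is_lub_u (opnorm_set r' c' C')); [apply specnorm_lub|].
  apply (is_lub_ext (opnorm_set r c C)); [|apply specnorm_lub].
  intros t. split; [apply (opnorm_set_reindex r c r' c' C C' sg tau); assumption|].
  apply (opnorm_set_reindex r' c' r c C' C sg' tau'); try assumption.
  intros i j Hi Hj. destruct (Hsg i Hi) as [Hi' Hsgi]. destruct (Htau j Hj) as [Hj' Htauj].
  rewrite HC, Hsgi, Htauj by assumption. reflexivity.
Qed.

Definition kronecker (r2 c2 : nat) (A1 A2 : mat) : mat :=
  fun i j => A1 (i / r2)%nat (j / c2)%nat * A2 (i mod r2)%nat (j mod c2)%nat.

Definition kronv (c2 : nat) (x y : nat -> R) : nat -> R :=
  fun j => x (j / c2)%nat * y (j mod c2)%nat.

Lemma kronecker_digits r2 c2 A1 A2 i1 i2 j1 j2 : (i2 < r2)%nat -> (j2 < c2)%nat ->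
  kronecker r2 c2 A1 A2 (i1 * r2 + i2)%nat (j1 * c2 + j2)%nat = A1 i1 j1 * A2 i2 j2.
Proof. intros. unfold kronecker. rewrite !div_mul_add, !mod_mul_add by assumption. reflexivity. Qed.

Lemma mulmv_kronecker r2 c1 c2 A1 A2 z i1 i2 : (i2 < r2)%nat ->
  mulmv (c1 * c2) (kronecker r2 c2 A1 A2) z (i1 * r2 + i2)%nat =
  mulmv c1 A1 (fun j1 => mulmv c2 A2 (fun j2 => z (j1 * c2 + j2)%nat) i2) i1.
Proof.
  intros Hi2. unfold mulmv. rewrite rsum_split. apply rsum_ext. intros j1 _.
  rewrite <- rsum_scal. apply rsum_ext. intros j2 Hj2.
  rewrite kronecker_digits by assumption. ring.
Qed.

Lemma mulmv_kronecker_kronv r2 c1 c2 A1 A2 x y i1 i2 : (i2 < r2)%nat ->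
  mulmv (c1 * c2) (kronecker r2 c2 A1 A2) (kronv c2 x y) (i1 * r2 + i2)%nat =
  mulmv c1 A1 x i1 * mulmv c2 A2 y i2.
Proof.
  intros Hi2. rewrite mulmv_kronecker by assumption. unfold mulmv.
  rewrite Rmult_comm, <- rsum_scal. apply rsum_ext. intros j1 _.
  rewrite (rsum_ext c2 _ (fun j2 => x j1 * (A2 i2 j2 * y j2))), rsum_scal; [ring|].
  intros j2 Hj2. unfold kronv. rewrite div_mul_add, mod_mul_add by assumption. ring.
Qed.

Lemma sqnorm_kronv c1 c2 x y : sqnorm (c1 * c2) (kronv c2 x y) = sqnorm c1 x * sqnorm c2 y.
Proof.
  rewrite sqnorm_split, <- sqnorm_mul. apply rsum_ext. intros j1 _.
  apply rsum_ext. intros j2 Hj2. unfold kronv. rewrite div_mul_add, mod_mul_add by assumption.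
  reflexivity.
Qed.

Lemma sqnorm_mulmv_kronecker_kronv r1 r2 c1 c2 A1 A2 x y :
  sqnorm (r1 * r2) (mulmv (c1 * c2) (kronecker r2 c2 A1 A2) (kronv c2 x y)) =
  sqnorm r1 (mulmv c1 A1 x) * sqnorm r2 (mulmv c2 A2 y).
Proof.
  rewrite sqnorm_split, <- sqnorm_mul. apply rsum_ext. intros i1 _.
  apply rsum_ext. intros i2 Hi2. rewrite mulmv_kronecker_kronv by assumption. reflexivity.
Qed.

Lemma sqnorm_mulmv_kronecker_le r1 r2 c1 c2 A1 A2 z :
  sqnorm (r1 * r2) (mulmv (c1 * c2) (kronecker r2 c2 A1 A2) z) <=
  (specnorm r1 c1 A1 * specnorm r2 c2 A2) ^ 2 * sqnorm (c1 * c2) z.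
Proof.
  set (s1 := specnorm r1 c1 A1). set (s2 := specnorm r2 c2 A2).
  set (w := fun i2 j1 => mulmv c2 A2 (fun j2 => z (j1 * c2 + j2)%nat) i2).
  rewrite sqnorm_split.
  rewrite (rsum_ext r1 _ (fun i1 => rsum r2 (fun i2 => mulmv c1 A1 (w i2) i1 ^ 2))) by
    (intros i1 _; apply rsum_ext; intros i2 Hi2; rewrite mulmv_kronecker by assumption;
     reflexivity).
  rewrite rsum_swap.
  apply Rle_trans with (rsum r2 (fun i2 => s1 ^ 2 * sqnorm c1 (w i2))).
  { apply rsum_le. intros i2 _. apply specnorm_bound. }
  rewrite rsum_scal. unfold sqnorm at 1. rewrite rsum_swap.
  apply Rle_trans with (s1 ^ 2 * rsum c1 (fun j1 =>
                          s2 ^ 2 * sqnorm c2 (fun j2 => z (j1 * c2 + j2)%nat))).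
  { apply Rmult_le_compat_l; [apply pow2_ge_0|]. apply rsum_le. intros j1 _.
    apply specnorm_bound. }
  rewrite rsum_scal, sqnorm_split. right. ring.
Qed.

Lemma specnorm_kronecker r1 c1 r2 c2 A1 A2 :
  specnorm (r1 * r2) (c1 * c2) (kronecker r2 c2 A1 A2) =
  specnorm r1 c1 A1 * specnorm r2 c2 A2.
Proof.
  pose proof (specnorm_nonneg r1 c1 A1). pose proof (specnorm_nonneg r2 c2 A2).
  apply Rle_antisym.
  - apply specnorm_le; [nra|]. apply sqnorm_mulmv_kronecker_le.
  - apply (is_lub_mul_le _ _ _ _ _ (specnorm_lub r1 c1 A1) (specnorm_lub r2 c2 A2));
      [assumption | apply specnorm_nonneg | intros t [y [_ ->]]; apply sqrt_pos |].
    intros t1 t2 [x [Hx ->]] [y [Hy ->]].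
    change (sqnorm c1 x <= 1) in Hx. change (sqnorm c2 y <= 1) in Hy.
    change (sqrt (sqnorm r1 (mulmv c1 A1 x)) * sqrt (sqnorm r2 (mulmv c2 A2 y))
            <= specnorm (r1 * r2) (c1 * c2) (kronecker r2 c2 A1 A2)).
    rewrite <- sqrt_mult, <- sqnorm_mulmv_kronecker_kronv by apply sqnorm_nonneg.
    apply norm_mulmv_le_specnorm. rewrite sqnorm_kronv.
    pose proof (sqnorm_nonneg c1 x). pose proof (sqnorm_nonneg c2 y). nra.
Qed.

Definition swap_mid (b c d y : nat) : nat :=
  ((y / d / c / b * c + (y / d) mod c) * b + (y / d / c) mod b) * d + y mod d.

Lemma digits4 a b c d y : (y < a * b * c * d)%nat ->
  exists y1 y2 y3 y4, (y1 < a)%nat /\ (y2 < b)%nat /\ (y3 < c)%nat /\ (y4 < d)%nat /\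
    y = (((y1 * b + y2) * c + y3) * d + y4)%nat.
Proof.
  intros Hy. assert (b <> 0 /\ c <> 0 /\ d <> 0)%nat as (Hb & Hc & Hd) by (split; [|split]; nia).
  exists (y / d / c / b)%nat, ((y / d / c) mod b)%nat, ((y / d) mod c)%nat, (y mod d)%nat.
  repeat split; try (apply Nat.mod_upper_bound; assumption).
  - apply Nat.Div0.div_lt_upper_bound, Nat.Div0.div_lt_upper_bound,
      Nat.Div0.div_lt_upper_bound. nia.
  - pose proof (Nat.div_mod_eq y d). pose proof (Nat.div_mod_eq (y / d) c).
    pose proof (Nat.div_mod_eq (y / d / c) b). nia.
Qed.

Lemma swap_mid_digits b c d y1 y2 y3 y4 : (y2 < b)%nat -> (y3 < c)%nat -> (y4 < d)%nat ->
  swap_mid b c d (((y1 * b + y2) * c + y3) * d + y4) = (((y1 * c + y3) * b + y2) * d + y4)%nat.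
Proof. intros. unfold swap_mid. rewrite !div_mul_add, !mod_mul_add by assumption. reflexivity. Qed.

Lemma swap_mid_inv a b c d y : (y < a * b * c * d)%nat ->
  (swap_mid b c d y < a * c * b * d)%nat /\ swap_mid c b d (swap_mid b c d y) = y.
Proof.
  intros Hy. destruct (digits4 a b c d y Hy) as (y1 & y2 & y3 & y4 & H1 & H2 & H3 & H4 & ->).
  rewrite !swap_mid_digits by assumption. split; [|reflexivity].
  repeat apply mul_add_lt; assumption.
Qed.

Lemma rsum_digits4 a b c d f : rsum (a * b * c * d) f =
  rsum a (fun y1 => rsum b (fun y2 => rsum c (fun y3 => rsum d (fun y4 =>
    f (((y1 * b + y2) * c + y3) * d + y4)%nat)))).
Proof.
  rewrite (rsum_split (a * b * c) d), (rsum_split (a * b) c), (rsum_split a b). reflexivity.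
Qed.

Lemma rsum_swap_mid a b c d f :
  rsum (a * b * c * d) (fun y => f (swap_mid b c d y)) = rsum (a * c * b * d) f.
Proof.
  rewrite !rsum_digits4. apply rsum_ext. intros y1 _. rewrite rsum_swap.
  apply rsum_ext. intros y3 Hy3. apply rsum_ext. intros y2 Hy2.
  apply rsum_ext. intros y4 Hy4. rewrite swap_mid_digits by assumption. reflexivity.
Qed.

Lemma mul_add_lt_pow k l x y : (x < 2 ^ k)%nat -> (y < 2 ^ l)%nat ->
  (x * 2 ^ l + y < 2 ^ (k + l))%nat.
Proof. intros. rewrite Nat.pow_add_r. apply mul_add_lt; assumption. Qed.

Lemma rearr_digits a b k l s t C p q u v : (a - k = s)%nat -> (b - l = t)%nat ->
  (q < 2 ^ l)%nat -> (v < 2 ^ t)%nat ->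
  rearr a b k l C (p * 2 ^ l + q)%nat (u * 2 ^ t + v)%nat
  = C (p * 2 ^ s + u)%nat (q * 2 ^ t + v)%nat.
Proof.
  intros <- <- Hq Hv. unfold rearr. rewrite !div_mul_add, !mod_mul_add by assumption. reflexivity.
Qed.

Lemma kron_digits M N m n s t A B i1 i2 j1 j2 : (M - m = s)%nat -> (N - n = t)%nat ->
  (i2 < 2 ^ s)%nat -> (j2 < 2 ^ t)%nat ->
  kron M N m n A B (i1 * 2 ^ s + i2)%nat (j1 * 2 ^ t + j2)%nat = A i1 j1 * B i2 j2.
Proof. intros <- <-. apply kronecker_digits. Qed.

Lemma interleave_digits b g d x1 x2 y1 y2 : (b = 0 \/ g = 0)%nat ->
  (x2 < 2 ^ b)%nat -> (y1 < 2 ^ g)%nat ->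
  ((x1 * 2 ^ b + x2) * 2 ^ (g + d) + (y1 * 2 ^ d + y2)
   = (x1 * 2 ^ g + y1) * 2 ^ (b + d) + (x2 * 2 ^ d + y2))%nat.
Proof.
  intros [-> | ->] Hx2 Hy1; simpl in *;
    [replace x2 with 0%nat by lia | replace y1 with 0%nat by lia];
    rewrite Nat.pow_add_r; ring.
Qed.

Section RearrKron.

Variables a b g d a' b' g' d' : nat.
Hypothesis hrow : (b = 0 \/ g = 0)%nat.
Hypothesis hcol : (b' = 0 \/ g' = 0)%nat.
Variables A B : mat.

Let M := (a + g + (b + d))%nat.
Let N := (a' + g' + (b' + d'))%nat.
Let rA := rearr (a + g) (a' + g') a a' A.
Let rB := rearr (b + d) (b' + d') b b' B.

Lemma rearr_kron_digits x1 x2 x3 x4 y1 y2 y3 y4 :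
  (x2 < 2 ^ b)%nat -> (x3 < 2 ^ a')%nat -> (x4 < 2 ^ b')%nat ->
  (y1 < 2 ^ g)%nat -> (y2 < 2 ^ d)%nat -> (y3 < 2 ^ g')%nat -> (y4 < 2 ^ d')%nat ->
  rearr M N (a + b) (a' + b') (kron M N (a + g) (a' + g') A B)
    (((x1 * 2 ^ b + x2) * 2 ^ a' + x3) * 2 ^ b' + x4)%nat
    (((y1 * 2 ^ d + y2) * 2 ^ g' + y3) * 2 ^ d' + y4)%nat
  = kronecker (2 ^ (b + b')) (2 ^ (d + d')) rA rB
    (((x1 * 2 ^ a' + x3) * 2 ^ b + x2) * 2 ^ b' + x4)%nat
    (((y1 * 2 ^ g' + y3) * 2 ^ d + y2) * 2 ^ d' + y4)%nat.
Proof.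
  intros Hx2 Hx3 Hx4 Hy1 Hy2 Hy3 Hy4.
  replace (((x1 * 2 ^ b + x2) * 2 ^ a' + x3) * 2 ^ b' + x4)%nat
    with ((x1 * 2 ^ b + x2) * 2 ^ (a' + b') + (x3 * 2 ^ b' + x4))%nat
    by (rewrite Nat.pow_add_r; ring).
  replace (((y1 * 2 ^ d + y2) * 2 ^ g' + y3) * 2 ^ d' + y4)%nat
    with ((y1 * 2 ^ d + y2) * 2 ^ (g' + d') + (y3 * 2 ^ d' + y4))%nat
    by (rewrite Nat.pow_add_r; ring).
  replace (((x1 * 2 ^ a' + x3) * 2 ^ b + x2) * 2 ^ b' + x4)%nat
    with ((x1 * 2 ^ a' + x3) * 2 ^ (b + b') + (x2 * 2 ^ b' + x4))%nat
    by (rewrite Nat.pow_add_r; ring).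
  replace (((y1 * 2 ^ g' + y3) * 2 ^ d + y2) * 2 ^ d' + y4)%nat
    with ((y1 * 2 ^ g' + y3) * 2 ^ (d + d') + (y2 * 2 ^ d' + y4))%nat
    by (rewrite Nat.pow_add_r; ring).
  rewrite (rearr_digits _ _ _ _ (g + d) (g' + d'))
    by (unfold M, N; lia || (apply mul_add_lt_pow; assumption)).
  rewrite (interleave_digits b g d), (interleave_digits b' g' d') by assumption.
  rewrite (kron_digits _ _ _ _ (b + d) (b' + d'))
    by (unfold M, N; lia || (apply mul_add_lt_pow; assumption)).
  rewrite kronecker_digits by (apply mul_add_lt_pow; assumption). unfold rA, rB.
  rewrite (rearr_digits _ _ _ _ g g'), (rearr_digits _ _ _ _ d d') by (lia || assumption).
  reflexivity.
Qed.

Lemma specnorm_rearr_kron_split :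
  specnorm_rearr M N (a + b) (a' + b') (kron M N (a + g) (a' + g') A B)
  = specnorm_rearr (a + g) (a' + g') a a' A * specnorm_rearr (b + d) (b' + d') b b' B.
Proof.
  unfold specnorm_rearr. fold rA rB. rewrite <- specnorm_kronecker.
  replace (M + N - (a + b) - (a' + b'))%nat with (g + d + (g' + d'))%nat by (unfold M, N; lia).
  replace (a + g + (a' + g') - a - a')%nat with (g + g')%nat by lia.
  replace (b + d + (b' + d') - b - b')%nat with (d + d')%nat by lia.
  replace (2 ^ (a + b + (a' + b')))%nat with (2 ^ a * 2 ^ b * 2 ^ a' * 2 ^ b')%nat
    by (rewrite !Nat.pow_add_r; ring).
  replace (2 ^ (g + d + (g' + d')))%nat with (2 ^ g * 2 ^ d * 2 ^ g' * 2 ^ d')%nat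
    by (rewrite !Nat.pow_add_r; ring).
  replace (2 ^ (a + a') * 2 ^ (b + b'))%nat with (2 ^ a * 2 ^ a' * 2 ^ b * 2 ^ b')%nat
    by (rewrite !Nat.pow_add_r; ring).
  replace (2 ^ (g + g') * 2 ^ (d + d'))%nat with (2 ^ g * 2 ^ g' * 2 ^ d * 2 ^ d')%nat
    by (rewrite !Nat.pow_add_r; ring).
  apply (specnorm_reindex _ _ _ _ _ _
           (swap_mid (2 ^ b) (2 ^ a') (2 ^ b')) (swap_mid (2 ^ d) (2 ^ g') (2 ^ d'))
           (swap_mid (2 ^ a') (2 ^ b) (2 ^ b')) (swap_mid (2 ^ g') (2 ^ d) (2 ^ d')));
    try (intros; apply swap_mid_inv; assumption);
    try (intros; apply rsum_swap_mid).
  intros i j Hi Hj.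
  destruct (digits4 _ _ _ _ i Hi) as (x1 & x2 & x3 & x4 & _ & Hx2 & Hx3 & Hx4 & ->).
  destruct (digits4 _ _ _ _ j Hj) as (y1 & y2 & y3 & y4 & Hy1 & Hy2 & Hy3 & Hy4 & ->).
  rewrite !swap_mid_digits by assumption.
  apply rearr_kron_digits; assumption.
Qed.

End RearrKron.

Lemma exponent_split m m' M : (m <= M)%nat -> (m' <= M)%nat ->
  exists a b g d, m = (a + g)%nat /\ m' = (a + b)%nat /\ M = (a + g + (b + d))%nat /\
    (b = 0 \/ g = 0)%nat.
Proof.
  intros. exists (Nat.min m m'), (m' - m)%nat, (m - m')%nat, (M - Nat.max m m')%nat. lia.
Qed.

Theorem lemma1 (M N m n : nat) (A B : mat) (m' n' : nat)
  (hm : (m <= M)%nat) (hn : (n <= N)%nat)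
  (hm' : (m' <= M)%nat) (hn' : (n' <= N)%nat) :
  specnorm_rearr M N m' n' (kron M N m n A B)
  = specnorm_rearr m n (Nat.min m m') (Nat.min n n') A
    * specnorm_rearr (M - m) (N - n) (m' - m) (n' - n) B.
Proof.
  destruct (exponent_split m m' M hm hm') as (a & b & g & d & -> & -> & -> & hrow).
  destruct (exponent_split n n' N hn hn') as (a' & b' & g' & d' & -> & -> & -> & hcol).
  replace (Nat.min (a + g) (a + b)) with a by lia.
  replace (Nat.min (a' + g') (a' + b')) with a' by lia.
  replace (a + b - (a + g))%nat with b by lia.
  replace (a' + b' - (a' + g'))%nat with b' by lia.
  replace (a + g + (b + d) - (a + g))%nat with (b + d)%nat by lia.
  replace (a' + g' + (b' + d') - (a' + g'))%nat with (b' + d')%nat by lia.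
  apply specnorm_rearr_kron_split; assumption.
Qed.
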